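(* Let $\mathcal{A}\subseteq\wp(\mathcal{G})$. (1) If $\emptyset\notin\mathrm{Ext}(\mathcal{A})$, then $\mathrm{Ext}(\mathcal{A})$ is coherent, $\mathcal{A}\subseteq\mathrm{Ext}(\mathcal{A})$, and $\mathrm{Ext}(\mathcal{A})\subseteq\mathcal{K}$ for every coherent $\mathcal{K}\subseteq\wp(\mathcal{G})$ with $\mathcal{A}\subseteq\mathcal{K}$; i.e. $\mathrm{Ext}(\mathcal{A})$ is the minimal coherent set extending $\mathcal{A}$. (2) If $\emptyset\in\mathrm{Ext}(\mathcal{A})$, then there is no coherent $\mathcal{K}\subseteq\wp(\mathcal{G})$ with $\mathcal{A}\subseteq\mathcal{K}$.
   Context: $\Omega$ is a non-empty set and $\mathcal{G}$ is the set of bounded functions $\Omega\to\mathbb{R}$. $f\geq g$ means pointwise $\geq$; $f\gneq g$ means $f\geq g$ and $f\neq g$; $\mathcal{G}_{\gneq 0}=\{f: f\gneq 0\}$. $\mathrm{posi}(B)=\{\sum_{i=1}^m\lambda_i h_i: m\geq1,\lambda_i>0,h_i\in B\}$, and $\mathcal{E}(E):=\mathrm{posi}(E\cup\mathcal{G}_{\gneq 0})$. A set $\mathcal{K}\subseteq\wp(\mathcal{G})$ is coherent if: (K$_\emptyset$) $\emptyset\notin\mathcal{K}$; (K$_0$) if $A\in\mathcal{K}$ then $A\setminus\{0\}\in\mathcal{K}$; (K$_{\gneq0}$) if $g\in\mathcal{G}_{\gneq0}$ then $\{g\}\in\mathcal{K}$; (K$_\supseteq$) if $A\in\mathcal{K}$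 and $B\supseteq A$ then $B\in\mathcal{K}$; (K$_{\mathrm{Dom}}$) if $A\in\mathcal{K}$ and for each $g\in A$, $f_g$ is a gamble with $f_g\geq g$, then $\{f_g: g\in A\}\in\mathcal{K}$; (K$_{\mathrm{Add}}$) if $A_1,\ldots,A_n\in\mathcal{K}$ (finitely many) and for each $\langle g_1,\ldots,g_n\rangle\in A_1\times\cdots\times A_n$, $f_{\langle g_1,\ldots,g_n\rangle}$ is some member of $\mathrm{posi}(\{g_1,\ldots,g_n\})$, then $\{f_{\langle g_1,\ldots,g_n\rangle}:\langle g_1,\ldots,g_n\rangle\in A_1\times\cdots\times A_n\}\in\mathcal{K}$. Definition of $\mathrm{Ext}$: if $\mathcal{A}\neq\emptyset$, $B\in\mathrm{Ext}(\mathcal{A})$ iff there are finitely many $A_1,\ldots,A_n\in\mathcal{A}$ ($n\geq1$) such that for each $\langle g_1,\ldots,g_n\rangle\in A_1\times\cdots\times A_n$ with $0\notin\mathcal{E}(\{g_1,\ldots,g_n\})$, there is some $f\in B$ with $f\in\mathcal{E}(\{g_1,\ldots,g_n\})$. If $\mathcal{A}=\emptyset$, $B\in\mathrm{Ext}(\emptyset)$ iff $B\cap\mathcal{G}_{\gneq0}\neq\emptyset$. *)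

From HB Require Import structures.
From mathcomp Require Import all_boot all_order all_algebra.
From mathcomp Require Import classical_sets reals.
Set Implicit Arguments. Unset Strict Implicit. Unset Printing Implicit Defensive.
Import Order.TTheory GRing.Theory Num.Theory.
Local Open Scope classical_set_scope.
Local Open Scope ring_scope.

Section Gambles.
Variables (Omega : Type) (R : realType).

Definition bounded_fun (f : Omega -> R) : Prop :=
  exists M : R, forall w, `|f w| <= M.

Definition gamble := {f : Omega -> R | bounded_fun f}.

Definition gval (g : gamble) : Omega -> R := proj1_sig g.

Lemma bounded_zero : bounded_fun (fun _ => 0).
Proof. by exists 0 => w; rewrite normr0. Qed.

Definition gzero : gamble := exist _ (fun _ => 0) bounded_zero.

Definition gge (f g : gamble) : Prop := forall w, gval g w <= gval f w.

Definition Gpos : set gamble :=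
  [set f | gge f gzero /\ f <> gzero].

Definition posi (B : set gamble) : set gamble :=
  [set f | exists (m : nat) (lam : 'I_m.+1 -> R) (h : 'I_m.+1 -> gamble),
     (forall i, 0 < lam i) /\ (forall i, B (h i)) /\
     (forall w, gval f w = \sum_(i < m.+1) lam i * gval (h i) w)].

Definition natext (E : set gamble) : set gamble := posi (E `|` Gpos).

Definition coherent (K : set (set gamble)) : Prop :=
  ~ K set0 /\
  (forall A, K A -> K (A `\` [set gzero])) /\
  (forall g, Gpos g -> K [set g]) /\
  (forall A B, K A -> A `<=` B -> K B) /\
  (forall A (f : gamble -> gamble), K A ->
                 (forall g, A g -> gge (f g) g) -> K (f @` A)) /\
  (forall (n : nat) (As : 'I_n -> set gamble)
                 (F : ('I_n -> gamble) -> gamble),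
                 (forall i, K (As i)) ->
                 (forall g : 'I_n -> gamble, (forall i, As i (g i)) ->
                    posi (range g) (F g)) ->
                 K (F @` [set g : 'I_n -> gamble | forall i, As i (g i)])).

Definition Ext (A : set (set gamble)) : set (set gamble) :=
  [set B | (A = set0 -> (B `&` Gpos) !=set0) /\
           (A !=set0 ->
              exists (n : nat) (As : 'I_n.+1 -> set gamble),
                (forall i, A (As i)) /\
                (forall g : 'I_n.+1 -> gamble, (forall i, As i (g i)) ->
                   ~ natext (range g) gzero ->
                   exists f, B f /\ natext (range g) f))].

End Gambles.

(* The natural extension E(X) is upward closed and closed under positive
   combinations, and each of its members is positive or dominates a positive
   combination of X.  Hence every defining condition of Ext(A) is stable under
   K_0, K_⊇, K_Dom and K_Add, and Ext(A) is coherent when it omits ∅.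
   Conversely, let K ⊇ A be coherent and B ∈ Ext(A) without positive members
   (otherwise K_{>0} suffices).  Apply K_Add to the witnessing members of A,
   choosing for each selection a positive combination that lies below 0 or
   below an element of B; K_Dom lifts it to 0 or to that element, and K_0
   with K_⊇ gives B ∈ K.  In particular ∅ ∈ Ext(A) forces ∅ ∈ K. *)
From HB Require Import structures.
From mathcomp Require Import all_boot all_order all_algebra.
From mathcomp Require Import boolp classical_sets reals lra.
Set Implicit Arguments. Unset Strict Implicit. Unset Printing Implicit Defensive.
Import Order.TTheory GRing.Theory Num.Theory.
Local Open Scope classical_set_scope.
Local Open Scope ring_scope.

Section Gambles.
Variables (Omega : Type) (R : realType).
Local Notation G := (gamble Omega R).
Local Notation gz := (gzero Omega R).
Local Notation Gp := (@Gpos Omega R).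

Lemma gambleP (f g : G) : (forall w, gval f w = gval g w) -> f = g.
Proof. by case: f g => [f hf] [g hg] /= fg; apply: eq_exist; apply: funext. Qed.

Lemma bounded_funD (f g : Omega -> R) :
  bounded_fun f -> bounded_fun g -> bounded_fun (fun w => f w + g w).
Proof.
move=> [M fM] [N gN]; exists (M + N) => w.
by apply: le_trans (ler_normD _ _) _; apply: lerD.
Qed.

Lemma bounded_funZ c (f : Omega -> R) :
  bounded_fun f -> bounded_fun (fun w => c * f w).
Proof. by move=> [M fM]; exists (`|c| * M) => w; rewrite normrM ler_wpM2l. Qed.

Definition gadd (f g : G) : G := exist _ _ (bounded_funD (svalP f) (svalP g)).
Definition gscale c (f : G) : G := exist _ _ (bounded_funZ c (svalP f)).

Lemma GposP f : Gp f <-> (forall w, 0 <= gval f w) /\ exists w, 0 < gval f w.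
Proof.
split=> [[f_ge0 f_neq0]|[f_ge0 [w fw_gt0]]]; last first.
  by split=> // f0; move: fw_gt0; rewrite f0 ltxx.
split=> //; apply: contrapT => f_le0; apply: f_neq0; apply: gambleP => w /=.
apply/eqP; rewrite eq_le f_ge0 andbT leNgt; apply/negP => fw_gt0.
by apply: f_le0; exists w.
Qed.

Lemma Gpos_neq0 f : Gp f -> f <> gz.
Proof. by case. Qed.

Lemma Gpos_ge f g : Gp f -> gge g f -> Gp g.
Proof.
move=> /GposP[f_ge0 [w fw_gt0]] gf; apply/GposP; split=> [v|].
  exact: le_trans (f_ge0 v) (gf v).
by exists w; apply: lt_le_trans fw_gt0 (gf w).
Qed.

Lemma posi_scale1 (X : set G) c x y : X x -> 0 < c ->
  (forall w, gval y w = c * gval x w) -> posi X y.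
Proof.
move=> Xx c_gt0 yE; exists 0%N, (fun _ => c), (fun _ => x).
by do 2 split=> //; move=> w; rewrite big_ord1 yE.
Qed.

Lemma sub_posi (X : set G) : X `<=` posi X.
Proof. by move=> x Xx; apply: (posi_scale1 Xx ltr01) => w; rewrite mul1r. Qed.

Lemma posiD (X : set G) a b y : posi X a -> posi X b ->
  (forall w, gval y w = gval a w + gval b w) -> posi X y.
Proof.
move=> [m1 [l1 [h1 [l1_gt0 [h1X aE]]]]] [m2 [l2 [h2 [l2_gt0 [h2X bE]]]]] yE.
pose l (i : 'I_(m1.+1 + m2.+1)) :=
  match split i with inl j => l1 j | inr j => l2 j end.
pose h (i : 'I_(m1.+1 + m2.+1)) :=
  match split i with inl j => h1 j | inr j => h2 j end.
exists (m1 + m2.+1)%N, l, h; split; [|split].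
- by move=> i; rewrite /l; case: split.
- by move=> i; rewrite /h; case: split.
move=> w; rewrite yE aE bE.
have -> : \sum_(i < (m1 + m2.+1).+1) l i * gval (h i) w =
          \sum_(i < m1.+1 + m2.+1) l i * gval (h i) w by [].
rewrite big_split_ord /=; congr (_ + _); apply: eq_bigr => i _.
  by rewrite /l /h (unsplitK (inl i)).
by rewrite /l /h (unsplitK (inr i)).
Qed.

Lemma posiZ (X : set G) c a y : 0 < c -> posi X a ->
  (forall w, gval y w = c * gval a w) -> posi X y.
Proof.
move=> c_gt0 [m [l [h [l_gt0 [hX aE]]]]] yE.
exists m, (fun i => c * l i), h; split; [|split] => //.
- by move=> i; apply: mulr_gt0.
- by move=> w; rewrite yE aE mulr_sumr; apply: eq_bigr => i _; rewrite mulrA.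
Qed.

Lemma posi_ind (X : set G) (P : G -> Prop) :
  (forall c x, 0 < c -> X x -> P (gscale c x)) ->
  (forall a b, P a -> P b -> P (gadd a b)) ->
  forall f, posi X f -> P f.
Proof.
move=> Pscale Padd f [m [l [h [l_gt0 [hX fE]]]]].
suff [y yE Py] : exists2 y : G,
    forall w, gval y w = \sum_(i < m.+1) l i * gval (h i) w & P y.
  by have -> : f = y by apply: gambleP => w; rewrite fE yE.
elim: m l h l_gt0 hX {fE} => [|m IHm] l h l_gt0 hX.
  by exists (gscale (l ord0) (h ord0)) => [w|]; [rewrite big_ord1 | apply: Pscale].
have [y yE Py] := IHm (fun i => l (lift ord0 i)) (fun i => h (lift ord0 i))
  (fun i => l_gt0 _) (fun i => hX _).
exists (gadd (gscale (l ord0) (h ord0)) y); last by apply: Padd => //; apply: Pscale.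
by move=> w; rewrite big_ord_recl -yE.
Qed.

Lemma posiS (X Y : set G) : X `<=` Y -> posi X `<=` posi Y.
Proof.
move=> XY f [m [l [h [l_gt0 [hX fE]]]]].
by exists m, l, h; split=> //; split=> // i; apply: XY.
Qed.

Lemma posi_posi (X : set G) : posi (posi X) `<=` posi X.
Proof.
apply: posi_ind => [c x c_gt0 Xx|a b Xa Xb]; first exact: posiZ c_gt0 Xx _.
exact: posiD Xa Xb _.
Qed.

Lemma posi_set0 (f : G) : ~ posi set0 f.
Proof. by move=> [m [l [h [_ [hX _]]]]]; apply: (hX ord0). Qed.

Lemma posi_Gpos : posi Gp `<=` Gp.
Proof.
apply: posi_ind => [c x c_gt0 /GposP[x_ge0 [w xw_gt0]]|a b].
  apply/GposP; split=> [v|]; first by apply: mulr_ge0; [exact: ltW|exact: x_ge0].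
  by exists w; apply: mulr_gt0.
move=> /GposP[a_ge0 [w aw_gt0]] /GposP[b_ge0 _]; apply/GposP.
split=> [v|]; first exact: addr_ge0 (a_ge0 v) (b_ge0 v).
by exists w; have := b_ge0 w; rewrite /gval /= in aw_gt0 *; lra.
Qed.

Lemma sub_natext (X : set G) : X `<=` natext X.
Proof. by move=> x Xx; apply: sub_posi; left. Qed.

Lemma Gpos_natext (X : set G) : Gp `<=` natext X.
Proof. by move=> x Gx; apply: sub_posi; right. Qed.

Lemma natextS (X Y : set G) : X `<=` Y -> natext X `<=` natext Y.
Proof. by move=> XY; apply: posiS => x [/XY|]; [left|right]. Qed.

Lemma posi_natext (X : set G) : posi (natext X) `<=` natext X.
Proof. exact: posi_posi. Qed.

(* A positive summand can be dropped from a combination. *)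
Lemma natextP (X : set G) f : natext X f ->
  Gp f \/ exists2 g, posi X g & gge f g.
Proof.
move: f; apply: posi_ind => [c x c_gt0 [Xx|Gx]|a b].
- by right; exists (gscale c x) => //; apply: posi_scale1 Xx c_gt0 _.
- by left; apply: posi_Gpos; apply: posi_scale1 Gx c_gt0 _.
case=> [Ga|[g Xg ag]] [Gb|[g' Xg' bg']].
- by left; apply: posi_Gpos; apply: posiD (sub_posi Ga) (sub_posi Gb) _.
- right; exists g' => // w; have [a_ge0 _] := (GposP a).1 Ga.
  by have := a_ge0 w; have := bg' w; rewrite /gval /=; lra.
- right; exists g => // w; have [b_ge0 _] := (GposP b).1 Gb.
  by have := b_ge0 w; have := ag w; rewrite /gval /=; lra.
- right; exists (gadd g g'); first exact: posiD Xg Xg' _.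
  by move=> w; have := ag w; have := bg' w; rewrite /gval /=; lra.
Qed.

Lemma natext0P (X : set G) : natext X gz -> exists2 g, posi X g & gge gz g.
Proof. by case/natextP => // /Gpos_neq0. Qed.

Lemma natext_ge (X : set G) b c : natext X b -> gge c b -> natext X c.
Proof.
move=> Xb cb; have [->//|c_neq_b] := pselect (c = b).
pose d := gadd c (gscale (-1) b).
have Gd : Gp d.
  apply/GposP; split=> [w|]; first by have := cb w; rewrite /gval /=; lra.
  apply: contrapT => d_le0; apply: c_neq_b; apply: gambleP => w.
  apply/eqP; rewrite eq_le cb andbT leNgt; apply/negP => bw_lt.
  by apply: d_le0; exists w; move: bw_lt; rewrite /gval /=; lra.
by apply: posiD Xb (Gpos_natext X Gd) _ => w; rewrite /gval /=; lra.
Qed.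

Definition ext_family (A : set (set G)) (B : set G) (I : Type) (As : I -> set G) :=
  (forall i, A (As i)) /\
  forall g : I -> G, (forall i, As i (g i)) -> ~ natext (range g) gz ->
    exists f, B f /\ natext (range g) f.

Lemma Ext_set0E (B : set G) : Ext set0 B <-> (B `&` Gp) !=set0.
Proof. by split=> [[+ _]|BGp]; [apply | split=> // -[]]. Qed.

Lemma Ext_nonemptyE (A : set (set G)) B : A !=set0 ->
  Ext A B <-> exists n (As : 'I_n.+1 -> set G), ext_family A B As.
Proof.
move=> A_neq0; split=> [[_]|EB]; first exact.
by split=> // A0; move: A_neq0; rewrite A0 => -[].
Qed.

Lemma ext_family_Ext (I : finType) (A : set (set G)) B (As : I -> set G) :
  I -> ext_family A B As -> Ext A B.
Proof.
move=> i0 [AAs AsB]; have A_neq0 : A !=set0 by exists (As i0).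
have cardI : #|{: I}| = #|{: I}|.-1.+1.
  by rewrite prednK //; apply/card_gt0P; exists i0.
pose e (k : 'I_#|{: I}|.-1.+1) : I := enum_val (cast_ord (esym cardI) k).
pose r (x : I) := cast_ord cardI (enum_rank x).
have erK x : e (r x) = x by rewrite /e /r cast_ordK enum_rankK.
apply/Ext_nonemptyE => //; exists #|{: I}|.-1, (As \o e).
split=> [k|g sel g0]; first exact: AAs.
have range_gr : range (g \o r) `<=` range g by move=> _ [x _ <-]; exists (r x).
have sel_gr x : As x ((g \o r) x) by have := sel (r x); rewrite /= erK.
have [|f [Bf Xf]] := AsB _ sel_gr; first by move/(natextS range_gr).
by exists f; split=> //; apply: natextS range_gr _ Xf.
Qed.

Lemma Ext_dominated (A : set (set G)) (B C : set G) :
  (forall f, B f -> f <> gz -> exists2 f', C f' & gge f' f) -> Ext A B -> Ext A C.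
Proof.
move=> BC; have [->|/eqP/set0P A_neq0] := pselect (A = set0).
  rewrite !Ext_set0E => -[f [Bf Gf]].
  have [f' Cf' f'f] := BC f Bf (Gpos_neq0 Gf).
  by exists f'; split=> //; apply: Gpos_ge Gf f'f.
rewrite !Ext_nonemptyE // => -[n [As [AAs AsB]]].
exists n, As; split=> // g sel g0; have [f [Bf Xf]] := AsB g sel g0.
have [|f' Cf' f'f] := BC f Bf; first by move=> f0; apply: g0; rewrite -f0.
by exists f'; split=> //; apply: natext_ge Xf f'f.
Qed.

Lemma Ext_Gpos (A : set (set G)) g : Gp g -> Ext A [set g].
Proof.
move=> Gg; have [->|/eqP/set0P[B AB]] := pselect (A = set0).
  by rewrite Ext_set0E; exists g.
apply: (@ext_family_Ext unit _ _ (fun _ => B)) => //; split=> // h _ _.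
by exists g; split=> //; apply: Gpos_natext.
Qed.

Lemma sub_Ext (A : set (set G)) : A `<=` Ext A.
Proof.
move=> B AB; apply: (@ext_family_Ext unit _ _ (fun _ => B)) => //.
split=> // g sel _; exists (g tt); split; first exact: sel.
by apply: sub_natext; exists tt.
Qed.

Lemma ext_family_combination (A : set (set G)) (I : Type) (J : I -> Type)
    (Bs : I -> set G) (As : forall i, J i -> set G) (F : (I -> G) -> G) :
  (forall i, ext_family A (Bs i) (As i)) ->
  (forall g : I -> G, (forall i, Bs i (g i)) -> posi (range g) (F g)) ->
  ext_family A (F @` [set g | forall i, Bs i (g i)])
    (fun x : {i & J i} => As (tag x) (tagged x)).
Proof.
move=> AsBs FP; split=> [[i j]|g sel g0]; first exact: (AsBs i).1.
have fs_ex i : exists f, Bs i f /\ natext (range g) f.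
  pose gi (j : J i) := g (existT _ i j).
  have range_gi : range gi `<=` range g by move=> _ [j _ <-]; exists (existT _ i j).
  have [|f [Bf Xf]] := (AsBs i).2 gi (fun j => sel (existT _ i j)).
    by move/(natextS range_gi).
  by exists f; split=> //; apply: natextS range_gi _ Xf.
have [fs fsP] := choice fs_ex.
exists (F fs); split; first by exists fs => // i; apply: (fsP i).1.
apply: posi_natext; apply: posiS (FP fs (fun i => (fsP i).1)).
by move=> _ [i _ <-]; apply: (fsP i).2.
Qed.

Lemma Ext_posi (A : set (set G)) n (Bs : 'I_n -> set G) (F : ('I_n -> G) -> G) :
  (forall i, Ext A (Bs i)) ->
  (forall g : 'I_n -> G, (forall i, Bs i (g i)) -> posi (range g) (F g)) ->
  Ext A (F @` [set g | forall i, Bs i (g i)]).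
Proof.
case: n Bs F => [|k] Bs F EBs FP.
  have sel : forall i : 'I_0, Bs i gz by case.
  exfalso; apply: (@posi_set0 (F (fun _ => gz))); apply: posiS (FP _ sel).
  by move=> x [i]; case: i.
have [A0|/eqP/set0P A_neq0] := pselect (A = set0).
  have Bs_Gpos i : exists p, Bs i p /\ Gp p by have := EBs i; rewrite A0 => /Ext_set0E.
  have [p pP] := choice Bs_Gpos.
  rewrite A0 Ext_set0E; exists (F p); split; first by exists p => // i; apply: (pP i).1.
  apply: posi_Gpos; apply: posiS (FP p (fun i => (pP i).1)).
  by move=> _ [i _ <-]; apply: (pP i).2.
have Bs_family i : exists S : {m : nat & 'I_m.+1 -> set G},
    ext_family A (Bs i) (projT2 S).
  have [m [As AsP]] := (Ext_nonemptyE _ A_neq0).1 (EBs i).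
  by exists (existT _ m As).
have [S SP] := choice Bs_family.
apply: (@ext_family_Ext {i : 'I_k.+1 & 'I_(projT1 (S i)).+1} _ _ _ (existT _ ord0 ord0)).
exact: ext_family_combination SP FP.
Qed.

Lemma coherent_Ext (A : set (set G)) : ~ Ext A set0 -> coherent (Ext A).
Proof.
move=> nE0; split=> //; split; [|split; [|split; [|split]]].
- by move=> B; apply: Ext_dominated => f Bf f0; exists f => // w.
- exact: Ext_Gpos.
- move=> B C EB BC; apply: Ext_dominated EB => f Bf _.
  by exists f => [|w]; [apply: BC|].
- move=> B up EB upP; apply: Ext_dominated EB => f Bf _.
  by exists (up f); [exists f|apply: upP].
- exact: Ext_posi.
Qed.

Lemma coherent_dominated_posi (K : set (set G)) n (As : 'I_n -> set G) (D : set G) :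
  coherent K -> (forall i, K (As i)) ->
  (forall g : 'I_n -> G, (forall i, As i (g i)) ->
     exists2 h, posi (range g) h & exists2 d, D d & gge d h) ->
  K (D `\` [set gz]).
Proof.
move=> [_ [K0 [_ [Ksup [Kdom Kadd]]]]] KAs AsD.
have comb g : exists h, (forall i, As i (g i)) ->
    posi (range g) h /\ exists2 d, D d & gge d h.
  have [sel|nsel] := pselect (forall i, As i (g i)); last by exists gz => /nsel.
  by have [h Xh Dh] := AsD g sel; exists h.
have [F FP] := choice comb.
have lift h : exists h', gge h' h /\ ((exists2 d, D d & gge d h) -> D h').
  have [[d Dd dh]|nD] := pselect (exists2 d, D d & gge d h); first by exists d.
  by exists h; split=> [w|/nD].
have [up upP] := choice lift.
have KF := Kadd n As F KAs (fun g sel => (FP g sel).1).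
apply: Ksup (K0 _ (Kdom _ up KF (fun h _ => (upP h).1))) _.
move=> _ [[_ [g sel <-] <-] up0]; split=> //.
exact: (upP _).2 (FP g sel).2.
Qed.

Lemma Ext_sub_coherent (A K : set (set G)) : coherent K -> A `<=` K -> Ext A `<=` K.
Proof.
move=> cK AK B EB; have [_ [_ [Kpos [Ksup _]]]] := cK.
have [[p [Bp Gp_p]]|nBGp] := pselect ((B `&` Gp) !=set0).
  by apply: Ksup (Kpos p Gp_p) _ => _ ->.
have A_neq0 : A !=set0.
  by apply/set0P/eqP => A0; apply: nBGp; move: EB; rewrite A0 Ext_set0E.
have [n [As [AAs AsB]]] := (Ext_nonemptyE _ A_neq0).1 EB.
have KB0 : K ((B `|` [set gz]) `\` [set gz]).
  apply: (coherent_dominated_posi cK (fun i => AK _ (AAs i))) => g sel.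
  have [X0|nX0] := pselect (natext (range g) gz).
    by have [h Xh h_le0] := natext0P X0; exists h => //; exists gz => //; right.
  have [f [Bf Xf]] := AsB g sel nX0.
  case: (natextP Xf) => [Gf|[h Xh fh]]; first by exfalso; apply: nBGp; exists f.
  by exists h => //; exists f => //; left.
by apply: Ksup KB0 _ => f [[//|f0] /(_ f0)].
Qed.

End Gambles.

Theorem mainTheorem3 (Omega : Type) (R : realType) (HOmega : inhabited Omega)
  (A : set (set (gamble Omega R))) :
  (~ Ext A set0 ->
     coherent (Ext A) /\ A `<=` Ext A /\
     (forall K : set (set (gamble Omega R)), coherent K -> A `<=` K -> Ext A `<=` K)) /\
  (Ext A set0 ->
     ~ exists K : set (set (gamble Omega R)), coherent K /\ A `<=` K).
Proof.
split=> [nE0|E0 [K [cK AK]]].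
  split; first exact: coherent_Ext.
  by split=> [|K]; [exact: sub_Ext | exact: Ext_sub_coherent].
by apply: cK.1; apply: Ext_sub_coherent cK AK _ E0.
Qed.
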